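(* Let $H$ be a complex separable Hilbert space and let $S,T\in B(H)$ be normal Hilbert–Schmidt operators such that the product $ST$ is normal. Then $\|ST\|_2\le\|TS\|_2$.
   Context: $\|\cdot\|_2$ denotes the Hilbert–Schmidt norm, $\|Z\|_2=(\operatorname{tr}(Z^*Z))^{1/2}$, and $S,T$ belong to the Hilbert–Schmidt class (the norm ideal associated with $\|\cdot\|_2$). *)

From HB Require Import structures.
From mathcomp Require Import all_boot all_order all_algebra.
From mathcomp Require Import all_classical all_reals all_analysis.
From mathcomp Require Import complex.
Set Implicit Arguments. Unset Strict Implicit. Unset Printing Implicit Defensive.
Import Order.TTheory GRing.Theory Num.Theory.
Local Open Scope ring_scope.
Local Open Scope classical_set_scope.

(* A complex separable Hilbert space is (unitarily isomorphic to) l^2(A) for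
   some index set A ⊆ nat (A = {0,..,n-1} or A = nat).  An operator on l^2(A)
   is encoded by its matrix (a i j) = <a e_j, e_i> w.r.t. the standard basis,
   extended by 0 outside A × A. *)
Definition cmx (R : realType) := nat -> nat -> R[i].

Definition supported_on (R : realType) (A : set nat) (a : cmx R) : Prop :=
  forall i j, ~ (A i /\ A j) -> a i j = 0.

Definition csq (R : realType) (z : R[i]) : R := (complex.Re z) ^+ 2 + (complex.Im z) ^+ 2.

Definition hs_norm2 (R : realType) (a : cmx R) : \bar R :=
  \esum_(ij in [set: nat * nat]) (csq (a ij.1 ij.2))%:E.

Definition hilbert_schmidt (R : realType) (a : cmx R) : Prop :=
  (hs_norm2 a < +oo)%E.

Definition hs_norm (R : realType) (a : cmx R) : R := Num.sqrt (fine (hs_norm2 a)).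

Definition cadj (R : realType) (a : cmx R) : cmx R := fun i j => conjc (a j i).

(* operator product: (ab)_ij = sum_k a_ik b_kj, a series (absolutely convergent
   for Hilbert–Schmidt a, b), computed via its real and imaginary parts *)
Definition cmul (R : realType) (a b : cmx R) : cmx R := fun i j =>
  Complex (limn (fun n => \sum_(0 <= k < n) complex.Re (a i k * b k j)))
          (limn (fun n => \sum_(0 <= k < n) complex.Im (a i k * b k j))).

Definition normal_op (R : realType) (a : cmx R) : Prop :=
  cmul (cadj a) a = cmul a (cadj a).

From HB Require Import structures.
From mathcomp Require Import all_boot all_order all_algebra.
From mathcomp Require Import all_classical all_reals all_analysis.
From mathcomp Require Import complex.
From mathcomp Require Import ring lra.
Import Order.TTheory GRing.Theory Num.Theory.
Import numFieldNormedType.Exports.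
Local Open Scope classical_set_scope.
Local Open Scope ring_scope.
Set Implicit Arguments. Unset Strict Implicit. Unset Printing Implicit Defensive.

(* If [S] is normal then [S^* S = S S^*], so [||S x|| = ||S^* x||] for every
   vector [x], both sides being [<S^* S x, x>].  Applied to the columns of [T]
   this gives [||S T||_2 = ||S^* T||_2 = ||T^* S||_2] (the middle step takes
   adjoints), and normality of [T] turns the last norm into [||T S||_2].
   In the matrix encoding, [||a x||^2] is the limit of the squared norms of the
   truncations [sum_(k < N) a_ik x_k], by dominated convergence over [i]
   (Cauchy-Schwarz bounds the [i]-th term by [||row_i a||^2 ||x||^2]), and each
   truncation is a finite quadratic form in the entries of [a^* a]. *)

Section ComplexFacts.
Variable R : realType.
Implicit Types (z w : R[i]).

Lemma Re_sum (I : Type) (r : seq I) (P : pred I) (F : I -> R[i]) :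
  complex.Re (\sum_(i <- r | P i) F i) = \sum_(i <- r | P i) complex.Re (F i).
Proof. exact: (raddf_sum (@complex.Re R : Rcomplex R -> R)). Qed.

Lemma Im_sum (I : Type) (r : seq I) (P : pred I) (F : I -> R[i]) :
  complex.Im (\sum_(i <- r | P i) F i) = \sum_(i <- r | P i) complex.Im (F i).
Proof. exact: (raddf_sum (@complex.Im R : Rcomplex R -> R)). Qed.

Lemma Re_mulc z w :
  complex.Re (z * w) = complex.Re z * complex.Re w - complex.Im z * complex.Im w.
Proof. by case: z; case: w. Qed.

Lemma Re_conjc z : complex.Re (conjc z) = complex.Re z.
Proof. by case: z. Qed.

Lemma Im_conjc z : complex.Im (conjc z) = - complex.Im z.
Proof. by case: z. Qed.

Lemma Re_mul_conjc z w :
  complex.Re (z * conjc w) = complex.Re z * complex.Re w + complex.Im z * complex.Im w.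
Proof. by case: z => a b; case: w => c d /=; ring. Qed.

Lemma csq_ge0 z : 0 <= csq z.
Proof. by rewrite /csq addr_ge0 // sqr_ge0. Qed.

Lemma csq_conjc z : csq (conjc z) = csq z.
Proof. by rewrite /csq Re_conjc Im_conjc sqrrN. Qed.

Lemma csq_sum (r : seq nat) (u : nat -> R[i]) :
  csq (\sum_(k <- r) u k) = \sum_(k <- r) \sum_(l <- r) complex.Re (u k * conjc (u l)).
Proof.
rewrite /csq Re_sum Im_sum !expr2 !mulr_suml -big_split; apply: eq_bigr => k _.
by rewrite !mulr_sumr -big_split; apply: eq_bigr => l _; rewrite Re_mul_conjc.
Qed.

Lemma norm_Re_mulc_le z w : `|complex.Re (z * w)| <= (csq z + csq w) / 2.
Proof.
rewrite Re_mulc /csq; case: z => a b; case: w => c d /=.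
have := sqr_ge0 (a - c); have := sqr_ge0 (b + d).
have := sqr_ge0 (a + c); have := sqr_ge0 (b - d).
by rewrite ler_norml; move=> *; apply/andP; split; nra.
Qed.

Lemma norm_Im_mulc_le z w : `|complex.Im (z * w)| <= (csq z + csq w) / 2.
Proof.
case: z => a b; case: w => c d /=; rewrite /csq /=.
have := sqr_ge0 (a - d); have := sqr_ge0 (b - c).
have := sqr_ge0 (a + d); have := sqr_ge0 (b + c).
by rewrite ler_norml; move=> *; apply/andP; split; nra.
Qed.

Lemma Re_mulc_conjc_le z1 w1 z2 w2 :
  2 * complex.Re ((z1 * w1) * conjc (z2 * w2)) <= csq z1 * csq w2 + csq z2 * csq w1.
Proof.
have := csq_ge0 (z1 * conjc w2 - z2 * conjc w1); rewrite /csq.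
by case: z1 => a b; case: w1 => c d; case: z2 => e f; case: w2 => g h /= ?; nra.
Qed.

Lemma csq_sum_mul_le (r : seq nat) (z w : nat -> R[i]) :
  csq (\sum_(k <- r) z k * w k) <=
  (\sum_(k <- r) csq (z k)) * (\sum_(k <- r) csq (w k)).
Proof.
set A := \sum_(k <- r) csq (z k); set B := \sum_(k <- r) csq (w k).
have AB : A * B = \sum_(k <- r) \sum_(l <- r) csq (z k) * csq (w l).
  by rewrite mulr_suml; apply: eq_bigr => k _; rewrite mulr_sumr.
have BA : A * B = \sum_(k <- r) \sum_(l <- r) csq (z l) * csq (w k).
  by rewrite exchange_big /= AB.
suff : 2 * csq (\sum_(k <- r) z k * w k) <= A * B + A * B by lra.
rewrite csq_sum mulr_sumr {1}AB BA -big_split /=; apply: ler_sum => k _.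
rewrite mulr_sumr -big_split /=; apply: ler_sum => l _; exact: Re_mulc_conjc_le.
Qed.

End ComplexFacts.

Section Series.
Variable R : realType.

Lemma cvg_big_add (I : Type) (r : seq I) (F : I -> nat -> R) (L : I -> R) :
  (forall k, F k n @[n --> \oo] --> L k) ->
  \sum_(k <- r) F k n @[n --> \oo] --> \sum_(k <- r) L k.
Proof. by move=> FL; apply: cvg_big => //; exact: add_continuous. Qed.

Lemma cvg_series_norm_le (u v : nat -> R) : (forall k, `|u k| <= v k) ->
  cvgn (series v) -> cvgn (series u).
Proof.
move=> uv cv; apply: normed_cvg; apply: (series_le_cvg _ _ uv cv) => // k.
exact: le_trans (uv k).
Qed.

Lemma nneseries_ge_term (u : nat -> \bar R) i : (forall k, (0 <= u k)%E) ->
  (u i <= \sum_(k <oo) u k)%E.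
Proof.
move=> u0; apply: le_trans (nneseries_lim_ge i.+1 (fun n _ _ => u0 n)).
by rewrite big_nat_recr //= leeDr // sume_ge0.
Qed.

Lemma nneseries_dominated_cvg (f : nat -> nat -> R) (g F : nat -> R) :
  (forall n i, 0 <= f n i) -> (forall n i, f n i <= g i) ->
  (forall i, f n i @[n --> \oo] --> F i) ->
  (\sum_(i <oo) (g i)%:E < +oo)%E ->
  (\sum_(i <oo) (f n i)%:E)%E @[n --> \oo] --> (\sum_(i <oo) (F i)%:E)%E.
Proof.
move=> f0 fg fF g_fin.
have F0 i : 0 <= F i.
  by rewrite -(cvg_lim _ (fF i)) //; apply: limr_ge; [exact: cvgP (fF i)|exact: nearW].
have g0 i : 0 <= g i by apply: le_trans (fg 0%N i).
have countE (h : nat -> R) : (forall i, 0 <= h i) ->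
    (\int[counting]_(i in [set: nat]) (h i)%:E = \sum_(i <oo) (h i)%:E)%E.
  by move=> h0; rewrite ge0_integral_count // => i; rewrite lee_fin.
rewrite -countE //; under eq_cvg do rewrite -countE //.
apply: (@dominated_cvg _ _ _ _ _ _ _ _ (fun i => (g i)%:E)) => //.
- by move=> i _; apply/fine_cvgP; split; [exact: nearW|exact: fF].
- apply/integrableP; split => //.
  by under eq_integral do rewrite gee0_abs ?lee_fin //; rewrite countE.
- by move=> n i _; rewrite gee0_abs ?lee_fin.
Qed.

End Series.

Section SquareSummable.
Variable R : realType.
Implicit Types (x y : nat -> R[i]).

Definition l2_norm2 x : \bar R := (\sum_(k <oo) (csq (x k))%:E)%E.

Definition l2 x := (l2_norm2 x < +oo)%E.

Lemma l2_norm2_ge0 x : (0 <= l2_norm2 x)%E.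
Proof. by apply: nneseries_ge0 => k _ _; rewrite lee_fin csq_ge0. Qed.

Lemma l2_norm2_fin_num x : l2 x -> l2_norm2 x \is a fin_num.
Proof. by move=> x2; rewrite ge0_fin_numE // l2_norm2_ge0. Qed.

Lemma sum_csq_le_l2_norm2 x N : l2 x -> \sum_(0 <= k < N) csq (x k) <= fine (l2_norm2 x).
Proof.
move=> x2; rewrite -lee_fin fineK ?l2_norm2_fin_num // -sumEFin.
by apply: nneseries_lim_ge => k _ _; rewrite lee_fin csq_ge0.
Qed.

Lemma l2_cvg_series x : l2 x -> cvgn (series (fun k => csq (x k))).
Proof. by move=> x2; apply: nnseries_is_cvg => // k; exact: csq_ge0. Qed.

Lemma l2_conjc x : l2 x -> l2 (fun k => conjc (x k)).
Proof.
rewrite /l2 /l2_norm2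
  (@eq_eseriesr _ (fun k => (csq (conjc (x k)))%:E) (fun k => (csq (x k))%:E)) //.
by move=> k _; rewrite csq_conjc.
Qed.

Lemma cvg_series_csq_half x y : l2 x -> l2 y ->
  cvgn (series (fun k => (csq (x k) + csq (y k)) / 2)).
Proof.
move=> x2 y2.
have -> : series (fun k => (csq (x k) + csq (y k)) / 2) =
    (fun n => (series (fun k => csq (x k)) n + series (fun k => csq (y k)) n) / 2).
  by apply/funext => n; rewrite /series /= -mulr_suml big_split.
by apply: is_cvgMr_tmp; apply: is_cvgD; exact: l2_cvg_series.
Qed.

Lemma cvg_series_Re_mulc x y : l2 x -> l2 y ->
  cvgn (series (fun k => complex.Re (x k * y k))).
Proof.
move=> x2 y2; apply: cvg_series_norm_le (cvg_series_csq_half x2 y2) => k.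
exact: norm_Re_mulc_le.
Qed.

Lemma cvg_series_Im_mulc x y : l2 x -> l2 y ->
  cvgn (series (fun k => complex.Im (x k * y k))).
Proof.
move=> x2 y2; apply: cvg_series_norm_le (cvg_series_csq_half x2 y2) => k.
exact: norm_Im_mulc_le.
Qed.

End SquareSummable.

Section HilbertSchmidt.
Variable R : realType.
Implicit Types (a b : cmx R).

Definition ctr a : cmx R := fun i j => a j i.

Lemma hs_norm2_rows a : hs_norm2 a = (\sum_(i <oo) l2_norm2 (fun k => a i k))%E.
Proof.
have csq0 i j : (0 <= (csq (a i j))%:E)%E by rewrite lee_fin csq_ge0.
rewrite /hs_norm2 /l2_norm2.
have -> : [set: nat * nat] = [set: nat] `*`` (fun _ => [set: nat]).
  by apply/seteqP; split => -[i j].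
rewrite -(esum_esum (a := fun i j => (csq (a i j))%:E)) //.
rewrite nneseries_esumT => [|i]; last exact: l2_norm2_ge0.
by apply: eq_esum => i _; rewrite nneseries_esumT.
Qed.

Lemma hs_norm2_ctr a : hs_norm2 (ctr a) = hs_norm2 a.
Proof.
rewrite /hs_norm2 (@reindex_esum _ _ _ [set: nat * nat] [set: nat * nat]
  (fun ij => (ij.2, ij.1))) //.
split => // [[i j] [k l] _ _ /= [-> ->] //|[i j] _]; by exists (j, i).
Qed.

Lemma hs_norm2_cols a : hs_norm2 a = (\sum_(j <oo) l2_norm2 (fun i => a i j))%E.
Proof. by rewrite -hs_norm2_ctr hs_norm2_rows. Qed.

Lemma hs_norm2_fin_num a : hilbert_schmidt a -> hs_norm2 a \is a fin_num.
Proof.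
by move=> aHS; rewrite ge0_fin_numE //; apply: esum_ge0 => ij _; rewrite lee_fin csq_ge0.
Qed.

Lemma hilbert_schmidt_row a i : hilbert_schmidt a -> l2 (fun k => a i k).
Proof.
rewrite /hilbert_schmidt hs_norm2_rows; apply: le_lt_trans.
by apply: nneseries_ge_term => k; exact: l2_norm2_ge0.
Qed.

Lemma hilbert_schmidt_col a j : hilbert_schmidt a -> l2 (fun i => a i j).
Proof.
rewrite /hilbert_schmidt hs_norm2_cols; apply: le_lt_trans.
by apply: nneseries_ge_term => k; exact: l2_norm2_ge0.
Qed.

Lemma cadjK a : cadj (cadj a) = a.
Proof. by apply/funext => i; apply/funext => j; rewrite /cadj conjcK. Qed.

Lemma hs_norm2_cadj a : hs_norm2 (cadj a) = hs_norm2 a.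
Proof.
rewrite -[LHS]/(hs_norm2 (ctr (fun i j => conjc (a i j)))) hs_norm2_ctr.
by apply: eq_esum => ij _; rewrite csq_conjc.
Qed.

Lemma hilbert_schmidt_cadj a : hilbert_schmidt a -> hilbert_schmidt (cadj a).
Proof. by rewrite /hilbert_schmidt hs_norm2_cadj. Qed.

Lemma cadj_cmul a b : (forall j, l2 (fun k => a j k)) -> (forall i, l2 (fun k => b k i)) ->
  cadj (cmul a b) = cmul (cadj b) (cadj a).
Proof.
move=> a2 b2; apply/funext => i; apply/funext => j.
have conjM k : conjc (b k i) * conjc (a j k) = conjc (a j k * b k i).
  by rewrite mulrC rmorphM.
rewrite /cadj /cmul /=; congr Complex.
  by congr (limn _); apply/funext => n; apply: eq_bigr => k _; rewrite conjM Re_conjc.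
rewrite -(limN (cvg_series_Im_mulc (a2 j) (b2 i))); congr (limn _); apply/funext => n /=.
by rewrite opprfctE /series /= -sumrN; apply: eq_bigr => k _; rewrite conjM Im_conjc.
Qed.

End HilbertSchmidt.

Section ApplyToVector.
Variable R : realType.
Implicit Types (a b c : cmx R) (x : nat -> R[i]).

Definition cmulv a x (i : nat) : R[i] :=
  Complex (limn (fun n => \sum_(0 <= k < n) complex.Re (a i k * x k)))
          (limn (fun n => \sum_(0 <= k < n) complex.Im (a i k * x k))).

Definition cmulv_trunc a x N i := \sum_(0 <= k < N) a i k * x k.

Lemma cmul_col a c j : (fun i => cmul a c i j) = cmulv a (fun k => c k j).
Proof. by []. Qed.

Lemma csq_cmulv_trunc_cvg a x i : l2 (fun k => a i k) -> l2 x ->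
  csq (cmulv_trunc a x N i) @[N --> \oo] --> csq (cmulv a x i).
Proof.
move=> a2 x2.
have ReC := cvg_series_Re_mulc a2 x2; have ImC := cvg_series_Im_mulc a2 x2.
under eq_cvg do rewrite /csq /cmulv_trunc Re_sum Im_sum !expr2.
by rewrite /csq !expr2; apply: cvgD; apply: cvgM.
Qed.

Lemma csq_cmulv_trunc_le a x N i : l2 (fun k => a i k) -> l2 x ->
  csq (cmulv_trunc a x N i) <= fine (l2_norm2 (fun k => a i k)) * fine (l2_norm2 x).
Proof.
move=> a2 x2; apply: le_trans (csq_sum_mul_le _ _ _) _.
by apply: ler_pM; rewrite ?sumr_ge0 ?sum_csq_le_l2_norm2 // => k _; exact: csq_ge0.
Qed.

Lemma cvg_l2_norm2_cmulv_trunc a x : hilbert_schmidt a -> l2 x ->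
  (\sum_(i <oo) (csq (cmulv_trunc a x N i))%:E)%E @[N --> \oo] --> l2_norm2 (cmulv a x).
Proof.
move=> aHS x2; apply: (nneseries_dominated_cvg
  (g := fun i => fine (l2_norm2 (fun k => a i k)) * fine (l2_norm2 x))).
- by move=> n i; exact: csq_ge0.
- by move=> n i; apply: csq_cmulv_trunc_le => //; exact: hilbert_schmidt_row.
- by move=> i; apply: csq_cmulv_trunc_cvg => //; exact: hilbert_schmidt_row.
rewrite (@eq_eseriesr _ _ (fun i => (fine (l2_norm2 x))%:E * l2_norm2 (fun k => a i k))%E);
  last first.
  by move=> i _; rewrite mulrC EFinM (fineK (l2_norm2_fin_num (hilbert_schmidt_row i aHS))).
rewrite nneseriesZl => [|i _]; last exact: l2_norm2_ge0.
by rewrite -hs_norm2_rows -(fineK (hs_norm2_fin_num aHS)) -EFinM ltry.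
Qed.

Definition gram_form (g : cmx R) x N :=
  \sum_(0 <= k < N) \sum_(0 <= l < N) complex.Re (x k * conjc (x l) * g l k).

Lemma csq_cmulv_trunc a x N i : csq (cmulv_trunc a x N i) =
  \sum_(0 <= k < N) \sum_(0 <= l < N)
    complex.Re (x k * conjc (x l) * (conjc (a i l) * a i k)).
Proof.
rewrite /cmulv_trunc csq_sum; apply: eq_bigr => k _; apply: eq_bigr => l _.
by rewrite rmorphM /=; congr complex.Re; ring.
Qed.

Lemma cvg_sum_csq_cmulv_trunc a x N : (forall k, l2 (fun i => a i k)) ->
  \sum_(0 <= i < n) csq (cmulv_trunc a x N i) @[n --> \oo] -->
  gram_form (cmul (cadj a) a) x N.
Proof.
move=> a2.
have partialE n : \sum_(0 <= i < n) csq (cmulv_trunc a x N i) =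
    \sum_(0 <= k < N) \sum_(0 <= l < N)
      complex.Re (x k * conjc (x l) * \sum_(0 <= i < n) conjc (a i l) * a i k).
  under eq_bigr do rewrite csq_cmulv_trunc.
  rewrite exchange_big; apply: eq_bigr => k _; rewrite exchange_big; apply: eq_bigr => l _.
  by rewrite -Re_sum mulr_sumr.
rewrite (funext partialE) /gram_form; apply: cvg_big_add => k; apply: cvg_big_add => l.
set p := x k * conjc (x l).
have -> : (fun n => complex.Re (p * \sum_(0 <= i < n) conjc (a i l) * a i k)) =
    (fun n => complex.Re p * \sum_(0 <= i < n) complex.Re (conjc (a i l) * a i k) -
              complex.Im p * \sum_(0 <= i < n) complex.Im (conjc (a i l) * a i k)).
  by apply/funext => n; rewrite Re_mulc Re_sum Im_sum.
rewrite Re_mulc; apply: cvgB; apply: cvgMl_tmp.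
- exact: (cvg_series_Re_mulc (l2_conjc (a2 l)) (a2 k)).
- exact: (cvg_series_Im_mulc (l2_conjc (a2 l)) (a2 k)).
Qed.

Lemma l2_norm2_cmulv_trunc a x N : (forall k, l2 (fun i => a i k)) ->
  (\sum_(i <oo) (csq (cmulv_trunc a x N i))%:E)%E = (gram_form (cmul (cadj a) a) x N)%:E.
Proof.
move=> a2; apply: cvg_lim => //; apply/fine_cvgP; split.
  by apply: nearW => n; rewrite sumEFin.
under eq_cvg do rewrite /= sumEFin /=.
exact: cvg_sum_csq_cmulv_trunc.
Qed.

Lemma l2_norm2_cmulv_gram a b x : hilbert_schmidt a -> hilbert_schmidt b ->
  cmul (cadj a) a = cmul (cadj b) b -> l2 x ->
  l2_norm2 (cmulv a x) = l2_norm2 (cmulv b x).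
Proof.
move=> aHS bHS gram_ab x2.
rewrite -(cvg_lim _ (cvg_l2_norm2_cmulv_trunc aHS x2)) //.
rewrite -(cvg_lim _ (cvg_l2_norm2_cmulv_trunc bHS x2)) //.
apply/congr_lim/funext => N /=.
rewrite !l2_norm2_cmulv_trunc ?gram_ab // => k; exact: hilbert_schmidt_col.
Qed.

End ApplyToVector.

Section NormalProducts.
Variable R : realType.
Implicit Types (a b c S T : cmx R).

Lemma hs_norm2_cmul_gram a b c :
  hilbert_schmidt a -> hilbert_schmidt b -> hilbert_schmidt c ->
  cmul (cadj a) a = cmul (cadj b) b -> hs_norm2 (cmul a c) = hs_norm2 (cmul b c).
Proof.
move=> aHS bHS cHS gram_ab; rewrite !hs_norm2_cols; apply: eq_eseriesr => j _.
rewrite !cmul_col.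
exact: (l2_norm2_cmulv_gram aHS bHS gram_ab (hilbert_schmidt_col j cHS)).
Qed.

Lemma hs_norm2_cmul_normal S T : hilbert_schmidt S -> hilbert_schmidt T ->
  normal_op S -> hs_norm2 (cmul S T) = hs_norm2 (cmul (cadj S) T).
Proof.
move=> SHS THS SN; apply: hs_norm2_cmul_gram => //.
- exact: hilbert_schmidt_cadj.
- by rewrite cadjK SN.
Qed.

Lemma hs_norm2_cmulC_normal S T : hilbert_schmidt S -> hilbert_schmidt T ->
  normal_op S -> normal_op T -> hs_norm2 (cmul S T) = hs_norm2 (cmul T S).
Proof.
move=> SHS THS SN TN.
rewrite hs_norm2_cmul_normal // -hs_norm2_cadj cadj_cmul ?cadjK.
- by rewrite -hs_norm2_cmul_normal.
- by move=> j; apply: hilbert_schmidt_row; exact: hilbert_schmidt_cadj.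
- by move=> i; exact: hilbert_schmidt_col.
Qed.

End NormalProducts.

Theorem mainTheorem6 (R : realType) (A : set nat) (S T : cmx R) :
  supported_on A S -> supported_on A T ->
  hilbert_schmidt S -> hilbert_schmidt T ->
  normal_op S -> normal_op T -> normal_op (cmul S T) ->
  hs_norm (cmul S T) <= hs_norm (cmul T S).
Proof.
(* for the Hilbert-Schmidt norm the inequality is an equality *)
move=> _ _ SHS THS SN TN _.
by rewrite /hs_norm (hs_norm2_cmulC_normal SHS THS SN TN).
Qed.
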